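(* Fix one of the following settings, with $\phi,\sigma$ commuting $\mathbb{C}$-linear automorphisms of $K$: (2S) $K=\mathbb{C}(x)$, $\phi(x)=x+h_1$, $\sigma(x)=x+h_2$, $h_1/h_2\notin\mathbb{Q}$; (2Q) $K=\bigcup_{j\ge1}\mathbb{C}(x^{1/j})$, $\phi(x)=q_1x$, $\sigma(x)=q_2x$, with $q_1,q_2\in\mathbb{C}^*$ multiplicatively independent and not both algebraic numbers of modulus one all of whose Galois conjugates have modulus one; (2M) $K=\bigcup_{j\ge1}\mathbb{C}(x^{1/j})$, $\phi(x)=x^{p_1}$, $\sigma(x)=x^{p_2}$, $p_1,p_2$ multiplicatively independent natural numbers. Let $\tilde a\in K^*$, $\tilde b\in K$, and assume that there exists a $\sigma$-Picard–Vessiot extension $L_A$ over $K$ for $\phi(Y)=AY$ with $A=\begin{pmatrix}\tilde a&\tilde b\\0&1\end{pmatrix}$ which is a field. Let $L$ be a field with $K\subset L\subset L_A$ and $\phi(L)\subset L$, and let $x\in L_A^*$ be such that $\phi(x)/x=\alpha\in L^*$. If the equation $\phi(y)=\tilde ay+\tilde b$ has a solution in $L(x)$, then it has a solution in $L$.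
   Context: For $A\in\mathrm{GL}_n(K)$, a $\sigma$-Picard–Vessiot extension for $\phi(Y)=AY$ over $K$ which is a field is a field extension $L_A$ of $K$ with commuting endomorphisms $\phi,\sigma$ extending those of $K$ such that there is $U\in\mathrm{GL}_n(L_A)$ with $\phi(U)=AU$, $L_A$ is generated as a field over $K$ by the entries of $\sigma^i(U)$, $i\ge0$, and $L_A^\phi=K^\phi=\mathbb{C}$. *)

From HB Require Import structures.
From mathcomp Require Import all_boot all_order all_algebra.
From mathcomp Require Import complex fraction.
From mathcomp Require Import reals.
Set Implicit Arguments. Unset Strict Implicit. Unset Printing Implicit Defensive.
Import Order.TTheory GRing.Theory Num.Theory.
Local Open Scope ring_scope.

(* The complex numbers are modelled as R[i] for R : realType (a complete
   archimedean ordered field, i.e. the real line). *)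
Notation RatFun C := {fraction {poly C}}.

Section Defs.
Variable R : realType.
Local Notation C := (R[i]).
Variable LA : fieldType.

Definition is_subfield (P : LA -> Prop) : Prop :=
  [/\ P 0, P 1,
      forall u v, P u -> P v -> P (u - v),
      forall u v, P u -> P v -> P (u * v)
    & forall u, P u -> P u^-1].

Definition in_gen_field (S : LA -> Prop) (y : LA) : Prop :=
  forall P : LA -> Prop, is_subfield P -> (forall z, S z -> P z) -> P y.

Definition matA (a b : LA) : 'M[LA]_2 :=
  \matrix_(i < 2, j < 2)
     (if ((i : nat) == 0%N) && ((j : nat) == 0%N) then a
      else if ((i : nat) == 0%N) && ((j : nat) == 1%N) then b
      else if ((i : nat) == 1%N) && ((j : nat) == 1%N) then 1
      else 0).

Definition fracX : RatFun C := tofrac 'X.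
Definition fracC (c : C) : RatFun C := tofrac c%:P.

(* q is an algebraic number all of whose Galois conjugates (roots of its
   minimal polynomial over Q, i.e. of an irreducible rational polynomial
   vanishing at q) have modulus one (this includes q itself). *)
Definition alg_conj_unimodular (q : C) : Prop :=
  exists P : {poly rat}, [/\ irreducible_poly P, root (map_poly ratr P) q
    & forall z : C, root (map_poly ratr P) z -> `|z| = 1].

(* Setting (2S).  K = C(x) embedded in LA via iota; iotaC embeds C. *)
Definition setting2S (iotaC : {rmorphism C -> LA}) (K : LA -> Prop)
  (phi sigma : {rmorphism LA -> LA}) : Prop :=
  exists (iota : {rmorphism RatFun C -> LA}) (h1 h2 : C),
  [/\ forall c, iota (fracC c) = iotaC c,
      forall y, K y <-> exists f, y = iota f,
      phi (iota fracX) = iota fracX + iotaC h1,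
      sigma (iota fracX) = iota fracX + iotaC h2
    & h2 != 0 /\ ~ (exists r : rat, h1 / h2 = ratr r)].

(* Settings (2Q), (2M).  K = \bigcup_{j>=1} C(x^{1/j}); iota j is the
   embedding of C(X) sending X to x^{1/j}, compatible: (x^{1/jk})^k = x^{1/j}. *)
Definition puiseux_embedding (iotaC : {rmorphism C -> LA}) (K : LA -> Prop)
  (iota : nat -> {rmorphism RatFun C -> LA}) : Prop :=
  [/\ forall j c, (0 < j)%N -> iota j (fracC c) = iotaC c,
      forall j k, (0 < j)%N -> (0 < k)%N ->
        (iota (j * k)%N fracX) ^+ k = iota j fracX
    & forall y, K y <-> exists j f, (0 < j)%N /\ y = iota j f].

Definition setting2Q (iotaC : {rmorphism C -> LA}) (K : LA -> Prop)
  (phi sigma : {rmorphism LA -> LA}) : Prop :=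
  exists (iota : nat -> {rmorphism RatFun C -> LA}) (q1 q2 : C)
         (r1 r2 : nat -> C),
  [/\ puiseux_embedding iotaC K iota,
      (* r1 j = q1^{1/j}, r2 j = q2^{1/j}, compatible choices of roots *)
      r1 1%N = q1 /\ r2 1%N = q2,
      forall j k, (0 < j)%N -> (0 < k)%N ->
        r1 (j * k)%N ^+ k = r1 j /\ r2 (j * k)%N ^+ k = r2 j,
      forall j, (0 < j)%N ->
        phi (iota j fracX) = iotaC (r1 j) * iota j fracX /\
        sigma (iota j fracX) = iotaC (r2 j) * iota j fracX
    & [/\ q1 != 0, q2 != 0,
          forall m n : int, q1 ^ m * q2 ^ n = 1 -> m = 0 /\ n = 0
        & ~ (alg_conj_unimodular q1 /\ alg_conj_unimodular q2)]].

Definition setting2M (iotaC : {rmorphism C -> LA}) (K : LA -> Prop)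
  (phi sigma : {rmorphism LA -> LA}) : Prop :=
  exists (iota : nat -> {rmorphism RatFun C -> LA}) (p1 p2 : nat),
  [/\ puiseux_embedding iotaC K iota,
      forall j, (0 < j)%N ->
        phi (iota j fracX) = iota j fracX ^+ p1 /\
        sigma (iota j fracX) = iota j fracX ^+ p2
    & [/\ (0 < p1)%N, (0 < p2)%N
        & forall m n : int, (p1%:Q) ^ m * (p2%:Q) ^ n = 1 -> m = 0 /\ n = 0]].

Definition base_setting (iotaC : {rmorphism C -> LA}) (K : LA -> Prop)
  (phi sigma : {rmorphism LA -> LA}) : Prop :=
  [/\ forall c, phi (iotaC c) = iotaC c,
      forall c, sigma (iotaC c) = iotaC c,
      forall y, phi (sigma y) = sigma (phi y)
    & setting2S iotaC K phi sigma \/ setting2Q iotaC K phi sigma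
      \/ setting2M iotaC K phi sigma].

Definition sigmaPV (iotaC : {rmorphism C -> LA}) (K : LA -> Prop)
  (phi sigma : {rmorphism LA -> LA}) (A : 'M[LA]_2) : Prop :=
  exists U : 'M[LA]_2,
  [/\ U \in unitmx,
      map_mx phi U = A *m U,
      forall y, in_gen_field
                  (fun z => K z \/ exists i r s, z = iter i sigma (U r s)) y
    & forall y, phi y = y <-> exists c, y = iotaC c].

End Defs.

From HB Require Import structures.
From mathcomp Require Import all_boot all_order all_algebra.
From mathcomp Require Import complex fraction reals boolp ring zify.
Set Implicit Arguments. Unset Strict Implicit. Unset Printing Implicit Defensive.
Import Order.TTheory GRing.Theory Num.Theory.
Local Open Scope ring_scope.

(* Put alpha = phi x / x, which lies in L.  Since phi x = alpha x, phi acts on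
   L[X] by the degree-preserving twist p |-> p^phi (alpha X), compatibly with
   evaluation at x.  It suffices to find D in L[X] with twist D - a D - b = 0:
   evaluating at X = 0 shows that the constant coefficient of D is a solution
   in L.  Write the given solution as y = P(x) / Q(x).
   - If x is transcendental over L, take D = P div Q with remainder r.
     Clearing denominators in phi y = a y + b gives the polynomial identity
     (twist D - a D - b) Q (twist Q) = a r (twist Q) - (twist r) Q, whose
     right-hand side has too small a degree unless both sides vanish.
   - If x is algebraic over L with minimal polynomial m, Bezout gives y = U(x)
     with deg U < deg m; then twist U - a U - b vanishes at x and has degree
     < deg m, so it is zero. *)

Section PropSubfield.
Variables (F : fieldType) (L : F -> Prop).
Hypothesis L_subfield : is_subfield L.

Lemma is_subfield_divring_closed : divring_closed (fun z => `[< L z >]).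
Proof.
case: L_subfield => L0 L1 LB LM LV.
split=> [|u v /asboolP Lu /asboolP Lv|u v /asboolP Lu /asboolP Lv];
  apply/asboolP => //.
- exact: LB.
- exact/LM/LV.
Qed.

Definition subfield_pred : divringClosed F :=
  HB.pack (fun z => `[< L z >] : bool)
    (GRing.isDivringClosed.Build F _ is_subfield_divring_closed).

Lemma subfield_predP z : reflect (L z) (z \in subfield_pred).
Proof. exact: asboolP. Qed.
End PropSubfield.

Arguments subfield_predP {F L L_subfield z}.

Section SubfieldType.
Variables (F : fieldType) (S : divringClosed F).

(* S as a field in its own right, so that Euclidean division and Bezout are
   available in S[X]. *)
Record subfield_of := SubfieldOf { subfield_val : F; _ : subfield_val \in S }.
HB.instance Definition _ := [isSub for subfield_val].
HB.instance Definition _ := [Choice of subfield_of by <:].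
HB.instance Definition _ := [SubChoice_isSubIntegralDomain of subfield_of by <:].
HB.instance Definition _ := [SubIntegralDomain_isSubField of subfield_of by <:].

End SubfieldType.

Section Adjunction.
Variables (F : fieldType) (S : divringClosed F) (x : F).
Local Notation B := (subfield_of S).

Definition evx : {rmorphism {poly B} -> F} :=
  horner_morph (fun c : B => mulrC x (val c)).

Lemma evxE p : evx p = (map_poly val p).[x]. Proof. by []. Qed.
Lemma evxC c : evx c%:P = val c. Proof. exact: horner_morphC. Qed.
Lemma evxX : evx 'X = x. Proof. exact: horner_morphX. Qed.

Definition adjoin_frac (y : F) : Prop :=
  exists P Q, evx Q != 0 /\ y = evx P / evx Q.

Lemma adjoin_frac_subfield : is_subfield adjoin_frac.
Proof.
have nz_ev1 : evx 1 != 0 by rewrite rmorph1 oner_neq0.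
split.
- by exists 0, 1; rewrite rmorph0 mul0r.
- by exists 1, 1; rewrite rmorph1 divr1 oner_neq0.
- move=> _ _ [P1 [Q1 [nzQ1 ->]]] [P2 [Q2 [nzQ2 ->]]].
  exists (P1 * Q2 - P2 * Q1), (Q1 * Q2); rewrite rmorphM mulf_neq0 //.
  by split=> //; rewrite rmorphB !rmorphM; field; apply/andP.
- move=> _ _ [P1 [Q1 [nzQ1 ->]]] [P2 [Q2 [nzQ2 ->]]].
  exists (P1 * P2), (Q1 * Q2); rewrite rmorphM mulf_neq0 //.
  by split=> //; rewrite !rmorphM mulf_div.
- move=> _ [P [Q [nzQ ->]]]; have [evP0|nzP] := eqVneq (evx P) 0.
    by exists 0, 1; rewrite evP0 mul0r invr0 rmorph0 mul0r.
  by exists Q, P; rewrite invf_div.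
Qed.

Lemma in_gen_field_adjoin_frac (T : F -> Prop) y :
  (forall z, T z -> z \in S \/ z = x) -> in_gen_field T y -> adjoin_frac y.
Proof.
move=> sub_T /(_ _ adjoin_frac_subfield); apply=> z /sub_T[zS | ->].
  by exists (Sub z zS : B)%:P, 1; rewrite rmorph1 oner_neq0 evxC divr1 SubK.
by exists 'X, 1; rewrite rmorph1 oner_neq0 evxX divr1.
Qed.

End Adjunction.

Section MinimalAnnihilator.
Variables (F : fieldType) (S : divringClosed F) (x : F).
Local Notation B := (subfield_of S).
Local Notation evx := (@evx _ S x).
Implicit Types (m p P Q U : {poly B}).

Lemma minimal_annihilator :
  (exists2 m, m != 0 & evx m = 0) ->
  exists m, [/\ m != 0, evx m = 0
              & forall p, evx p = 0 -> (size p < size m)%N -> p = 0].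
Proof.
case=> m0 nz_m0 evm0.
pose size_ann n := `[< exists2 m, evx m = 0 & size m = n.+1 >].
have ex_ann : exists n, size_ann n.
  exists (size m0).-1; apply/asboolP; exists m0 => //.
  by rewrite prednK // size_poly_gt0.
have [n /asboolP[m evm sz_m] min_n] := ex_minnP ex_ann.
exists m; split=> // [|p evp lt_p]; first by rewrite -size_poly_gt0 sz_m.
apply/eqP; rewrite -size_poly_eq0; apply: contraTT lt_p => nz_p.
rewrite -leqNgt sz_m -(prednK (n := size p)) ?lt0n // ltnS min_n //.
by apply/asboolP; exists p; rewrite // prednK // lt0n.
Qed.

Lemma annihilator_size_gt1 m : m != 0 -> evx m = 0 -> (1 < size m)%N.
Proof.
move=> nz_m evm; rewrite ltnNge; apply: contra nz_m => /size1_polyC mE.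
by rewrite mE polyC_eq0 -val_eqE rmorph0 -(evxC x) -mE evm.
Qed.

Section Minimal.
Variable m : {poly B}.
Hypotheses (nz_m : m != 0) (evm : evx m = 0).
Hypothesis min_m : forall p, evx p = 0 -> (size p < size m)%N -> p = 0.

Lemma minimal_annihilator_coprime Q : evx Q != 0 -> coprimep m Q.
Proof.
move=> nzQ; set g := gcdp m Q.
have nz_mg : m %/ g != 0.
  apply: contraNneq nz_m => mg0.
  by rewrite -(divpK (dvdp_gcdl m Q)) -/g mg0 mul0r.
have /negPf evg : evx g != 0.
  apply: contraNneq nzQ => evg.
  by rewrite -(divpK (dvdp_gcdr m Q)) rmorphM evg mulr0.
have : evx (m %/ g) * evx g = 0 by rewrite -rmorphM divpK ?dvdp_gcdl.
move/eqP; rewrite mulf_eq0 evg orbF => /eqP /min_m min_mg.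
rewrite /coprimep -/g eqn_leq size_poly_gt0 gcdp_eq0 negb_and nz_m andbT.
apply: contraR nz_mg => gt1_g; apply/eqP/min_mg.
rewrite size_divp ?gcdp_eq0 ?negb_and ?nz_m // ltn_subrL size_poly_gt0 nz_m.
by rewrite andbT -subn1 subn_gt0 ltnNge.
Qed.

Lemma adjoin_frac_poly P Q :
  evx Q != 0 -> exists2 U : {poly B}, (size U < size m)%N & evx P / evx Q = evx U.
Proof.
move=> nzQ.
have [[u v] /= uvE] := Bezout_eq1_coprimepP _ _ (minimal_annihilator_coprime nzQ).
have evvQ : evx v * evx Q = 1.
  by rewrite -(rmorph1 evx) -uvE rmorphD !rmorphM evm mulr0 add0r.
exists ((P * v) %% m); first by rewrite ltn_modp.
have -> : evx ((P * v) %% m) = evx (P * v).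
  by rewrite {2}(divp_eq (P * v) m) rmorphD rmorphM evm mulr0 add0r.
rewrite rmorphM; congr (_ * _).
by apply: (mulIf nzQ); rewrite mulVf // evvQ.
Qed.

End Minimal.

End MinimalAnnihilator.

Section Twist.
Variables (F : fieldType) (S : divringClosed F) (phi : {rmorphism F -> F}).
Hypothesis phiS : {homo phi : z / z \in S}.
Variable x : F.
Hypotheses (x_neq0 : x != 0) (alphaS : phi x / x \in S).
Local Notation B := (subfield_of S).
Local Notation evx := (@evx _ S x).

Definition phiB (c : B) : B := Sub (phi (val c)) (phiS (valP c)).
Definition alphaB : B := Sub (phi x / x) alphaS.

Definition twist (p : {poly B}) : {poly B} := map_poly phiB p \Po (alphaB *: 'X).

Lemma val_phiB c : val (phiB c) = phi (val c). Proof. exact: SubK. Qed.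

Lemma phiB_eq0 c : (phiB c == 0) = (c == 0).
Proof. by rewrite -!val_eqE /= fmorph_eq0. Qed.

Lemma size_twist p : size (twist p) = size p.
Proof.
have alpha_neq0 : alphaB != 0.
  by rewrite -val_eqE /= mulf_neq0 ?invr_eq0 ?fmorph_eq0.
rewrite size_comp_poly2; last by rewrite size_scale ?size_polyX.
have [->|nz_p] := eqVneq p 0; first by rewrite map_poly0.
by rewrite size_map_poly_id0 // phiB_eq0 lead_coef_eq0.
Qed.

Lemma evx_twist p : evx (twist p) = phi (evx p).
Proof.
rewrite !evxE map_comp_poly horner_comp map_polyZ map_polyX hornerZ hornerX.
rewrite -map_poly_comp (eq_map_poly val_phiB) map_poly_comp /=.
by rewrite divfK // horner_map.
Qed.

Variables a b : B.
Implicit Types (p P Q : {poly B}).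

Definition affine_defect p := twist p - a *: p - b%:P.

Lemma evx_affine_defect p :
  evx (affine_defect p) = phi (evx p) - val a * evx p - val b.
Proof. by rewrite !rmorphB evx_twist // -mul_polyC rmorphM !evxC. Qed.

Lemma affine_defect_eq0 p :
  affine_defect p = 0 -> phi (val p`_0) = val a * val p`_0 + val b.
Proof.
move=> /(congr1 (horner^~ 0)); rewrite /affine_defect /twist !hornerE horner_comp.
rewrite hornerZ hornerX mulr0 !horner_coef0 coef_map_id0; last first.
  by apply: val_inj; rewrite val_phiB !rmorph0.
move/eqP; rewrite subr_eq0 subr_eq addrC => /eqP /(congr1 val).
by rewrite rmorphD rmorphM val_phiB.
Qed.

Lemma size_affine_defect_lt p n :
  (1 < n)%N -> (size p < n)%N -> (size (affine_defect p) < n)%N.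
Proof.
move=> gt1_n lt_p_n; have lt_twp : (size (twist p - a *: p)%R < n)%N.
  rewrite (leq_ltn_trans (size_polyD _ _)) // size_polyN gtn_max size_twist //.
  by rewrite lt_p_n (leq_ltn_trans (size_scale_leq _ _)).
rewrite (leq_ltn_trans (size_polyD _ _)) // size_polyN gtn_max lt_twp.
exact: leq_ltn_trans (size_polyC_leq1 _) gt1_n.
Qed.

Lemma affine_defect_divp_eq0 P Q :
  (forall p, evx p = 0 -> p = 0) -> evx Q != 0 ->
  phi (evx P / evx Q) = val a * (evx P / evx Q) + val b ->
  affine_defect (P %/ Q) = 0.
Proof.
move=> evx_inj nzQ; set D := P %/ Q; set r := P %% Q.
have nz_Q : Q != 0 by apply: contraNneq nzQ => ->; rewrite rmorph0.
have nz_phiQ : phi (evx Q) != 0 by rewrite fmorph_eq0.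
have nz_twQ : twist Q != 0 by rewrite -size_poly_gt0 size_twist // size_poly_gt0.
rewrite (divp_eq P Q) -/D -/r fmorph_div !rmorphD !rmorphM => sol.
have key : affine_defect D * Q * twist Q = a *: r * twist Q - twist r * Q.
  apply/eqP; rewrite -subr_eq0; apply/eqP/evx_inj.
  rewrite !rmorphB !rmorphM evx_affine_defect !evx_twist //.
  rewrite -mul_polyC rmorphM evxC.
  have -> : phi (evx D) = val a * ((evx D * evx Q + evx r) / evx Q) + val b
                          - phi (evx r) / phi (evx Q) by rewrite -sol; field.
  by field; apply/andP.
apply/eqP/negPn/negP => nz_D.
move: (congr1 (fun p : {poly B} => size p) key) => /=.
rewrite !size_mul ?mulf_neq0 // size_twist // => eq_size.
have le_rhs : (size (a *: r * twist Q - twist r * Q)%R <= (size r + size Q).-1)%N.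
  rewrite (leq_trans (size_polyD _ _)) // size_polyN geq_max.
  rewrite !(leq_trans (size_polyMleq _ _)) // size_twist //.
  by rewrite -!subn1 leq_sub2r // leq_add2r size_scale_leq.
have lt_r : (size r < size Q)%N by rewrite ltn_modp.
have : (0 < size (affine_defect D))%N by rewrite size_poly_gt0.
have : (0 < size Q)%N by rewrite size_poly_gt0.
move: le_rhs lt_r; rewrite -eq_size.
move: (size (affine_defect D)) (size Q) (size r) => sD sQ sr; lia.
Qed.

Lemma adjoin_frac_affine_solution y :
  adjoin_frac S x y -> phi y = val a * y + val b -> exists p, affine_defect p = 0.
Proof.
case=> P [Q [nzQ ->]] sol.
have [alg_x | transc_x] := pselect (exists2 m : {poly B}, m != 0 & evx m = 0).
  have [m [nz_m evm min_m]] := minimal_annihilator alg_x.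
  have [U lt_U evU] := adjoin_frac_poly nz_m evm min_m P nzQ.
  exists U; apply: min_m.
    by rewrite evx_affine_defect -evU sol addrAC addrK subrr.
  exact: size_affine_defect_lt (annihilator_size_gt1 nz_m evm) lt_U.
exists (P %/ Q); apply: affine_defect_divp_eq0 nzQ sol => p evp.
by apply/eqP/negPn/negP => nz_p; apply: transc_x; exists p.
Qed.

End Twist.

Theorem lemma4p7 (R : realType) (LA : fieldType)
  (iotaC : {rmorphism R[i] -> LA}) (K : LA -> Prop)
  (phi sigma : {rmorphism LA -> LA})
  (hset : base_setting iotaC K phi sigma)
  (a b : LA) (Ka : K a) (Kb : K b) (a0 : a != 0)
  (hPV : sigmaPV iotaC K phi sigma (matA a b))
  (L : LA -> Prop) (Lsub : is_subfield L) (KL : forall z, K z -> L z)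
  (phiL : forall z, L z -> L (phi z))
  (x : LA) (x0 : x != 0) (Lalpha : L (phi x / x))
  (hsol : exists y, in_gen_field (fun z => L z \/ z = x) y /\
                    phi y = a * y + b) :
  exists y, L y /\ phi y = a * y + b.
Proof.
case: hsol => y [gen_y sol_y].
pose S := subfield_pred Lsub.
have phiS : {homo phi : z / z \in S}.
  by move=> z /subfield_predP Lz; apply/subfield_predP/phiL.
have alphaS : phi x / x \in S by apply/subfield_predP.
have aS : a \in S by apply/subfield_predP/KL.
have bS : b \in S by apply/subfield_predP/KL.
have sol_y' :
    phi y = val (Sub a aS : subfield_of S) * y + val (Sub b bS : subfield_of S).
  by rewrite !SubK.
have y_frac : adjoin_frac S x y.
  apply: in_gen_field_adjoin_frac gen_y => z [Lz | ->]; last by right.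
  by left; apply/subfield_predP.
have [p /affine_defect_eq0 sol_p] :=
  adjoin_frac_affine_solution phiS x0 alphaS y_frac sol_y'.
exists (val p`_0); split; first exact/subfield_predP/valP.
by move: sol_p; rewrite !SubK.
Qed.
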